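(* Let $\alpha:\mathbf A\to\mathbf B$ be a surjective homomorphism of $\tau$-algebras, and write $\alpha^\omega:A^\omega\to B^\omega$ for its coordinatewise extension. Then: (1) for every function $\varphi:A^\omega\to A$ there is at most one $\psi:B^\omega\to B$ with $\psi\circ\alpha^\omega=\alpha\circ\varphi$; when it exists, denote it $\alpha^\star(\varphi)$; (2) the set $C$ of all $\varphi:A^\omega\to A$ for which $\alpha^\star(\varphi)$ exists is the universe of a subalgebra $\mathcal C$ of $\mathcal O^{(\omega)}_{\mathbf A}$; (3) $\alpha^\star:\mathcal C\to\mathcal O^{(\omega)}_{\mathbf B}$ is a surjective homomorphism of infinitary clone $\tau$-algebras.
   Context: $\tau$ is a set of $\omega$-ary operation symbols; a $\tau$-algebra has operations $f^{\mathbf A}:A^\omega\to A$. For a $\tau$-algebra $\mathbf A$, $\mathcal O^{(\omega)}_{\mathbf A}$ is the algebra whose universe is all functions $A^\omega\to A$, with constants $e_i(s)=s_i$ ($i\in\omega$), a constant $f^{\mathbf A}$ for each $f\in\tau$, and the $\omega$-ary operation $q(g_0,g_1,\dots)(s)=g_0(g_1(s),g_2(s),\dots)$; this is an infinitary clone $\tau$-algebra (an algebra with constants $e_i$, $f$ and $\omega$-ary $q$ satisfying $q(e_i,x_0,x_1,\dots)=x_i$, $q(x,e_0,e_1,\dots)=x$, and $q(q(x,\boldsymbol y),\boldsymbol z)=q(x,q(y_0,\boldsymbol z),q(y_1,\boldsymbol z),\dots)$). *)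

From Stdlib Require Import ClassicalEpsilon.

(* A tau-algebra with omega-ary operations: carrier A, interpretation
   op : tau -> (nat -> A) -> A.  A^omega is represented by nat -> A. *)

Definition is_hom {tau A B : Type} (opA : tau -> (nat -> A) -> A)
  (opB : tau -> (nat -> B) -> B) (alpha : A -> B) : Prop :=
  forall (f : tau) (s : nat -> A), alpha (opA f s) = opB f (fun i => alpha (s i)).

Definition alpha_omega {A B : Type} (alpha : A -> B) (s : nat -> A) : nat -> B :=
  fun i => alpha (s i).

(* Operations of the clone algebra O^(omega)_A (universe: (nat -> A) -> A) *)
Definition clone_e {A : Type} (i : nat) : (nat -> A) -> A := fun s => s i.
Definition clone_q {A : Type} (g : nat -> ((nat -> A) -> A)) : (nat -> A) -> A :=
  fun s => g 0 (fun i => g (S i) s).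

Definition is_lift {A B : Type} (alpha : A -> B) (phi : (nat -> A) -> A)
  (psi : (nat -> B) -> B) : Prop :=
  forall s : nat -> A, psi (alpha_omega alpha s) = alpha (phi s).

Definition liftable {A B : Type} (alpha : A -> B) (phi : (nat -> A) -> A) : Prop :=
  exists psi, is_lift alpha phi psi.

(* alpha^star(phi): the lift if it exists (chosen by epsilon; by part (1)
   it is unique), and an irrelevant default (the projection e_0) otherwise. *)
Definition alpha_star {A B : Type} (alpha : A -> B) (phi : (nat -> A) -> A)
  : (nat -> B) -> B :=
  epsilon (inhabits (fun s : nat -> B => s 0)) (fun psi => is_lift alpha phi psi).

From Stdlib Require Import ClassicalEpsilon FunctionalExtensionality.

(* Surjectivity of alpha makes alpha^omega surjective (by choice), so a lift is
   determined on all of B^omega; the lifts of e_i, f and q(g_0, g_1, ...) are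
   e_i, f^B and q of the lifts, and every psi lifts a function of the form
   sec o psi o alpha^omega for a section sec of alpha. *)

Section Lifts.

Context {A B : Type} (alpha : A -> B).

Definition surjective_map := forall b : B, exists a : A, alpha a = b.

Lemma section_of_surjective :
  surjective_map -> exists sec : B -> A, forall b, alpha (sec b) = b.
Proof. intro Hsurj. exact (choice (fun b a => alpha a = b) Hsurj). Qed.

Lemma alpha_omega_surjective :
  surjective_map -> forall t : nat -> B, exists s, alpha_omega alpha s = t.
Proof.
  intros Hsurj t. destruct (section_of_surjective Hsurj) as [sec Hsec].
  exists (fun i => sec (t i)).
  apply functional_extensionality; intro i; apply Hsec.
Qed.

Lemma is_lift_unique (phi : (nat -> A) -> A) (psi1 psi2 : (nat -> B) -> B) :
  surjective_map -> is_lift alpha phi psi1 -> is_lift alpha phi psi2 -> psi1 = psi2.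
Proof.
  intros Hsurj H1 H2. apply functional_extensionality; intro t.
  destruct (alpha_omega_surjective Hsurj t) as [s <-].
  now rewrite H1, H2.
Qed.

Lemma alpha_star_is_lift (phi : (nat -> A) -> A) :
  liftable alpha phi -> is_lift alpha phi (alpha_star alpha phi).
Proof. exact (epsilon_spec _ (fun psi => is_lift alpha phi psi)). Qed.

Lemma alpha_star_eq (phi : (nat -> A) -> A) (psi : (nat -> B) -> B) :
  surjective_map -> is_lift alpha phi psi -> alpha_star alpha phi = psi.
Proof.
  intros Hsurj H. apply (is_lift_unique phi); [exact Hsurj | | exact H].
  apply alpha_star_is_lift; now exists psi.
Qed.

Lemma is_lift_clone_e (i : nat) : is_lift alpha (clone_e i) (clone_e i).
Proof. intro s; reflexivity. Qed.

Lemma is_lift_op (tau : Type) (opA : tau -> (nat -> A) -> A)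
  (opB : tau -> (nat -> B) -> B) (f : tau) :
  is_hom opA opB alpha -> is_lift alpha (opA f) (opB f).
Proof. intros Hhom s. symmetry; apply Hhom. Qed.

Lemma is_lift_clone_q (g : nat -> (nat -> A) -> A) (h : nat -> (nat -> B) -> B) :
  (forall j, is_lift alpha (g j) (h j)) -> is_lift alpha (clone_q g) (clone_q h).
Proof.
  intros Hgh s. unfold clone_q.
  replace (fun i => h (S i) (alpha_omega alpha s))
    with (alpha_omega alpha (fun i => g (S i) s)).
  - apply Hgh.
  - apply functional_extensionality; intro i; symmetry; apply Hgh.
Qed.

Lemma is_lift_through_section (psi : (nat -> B) -> B) :
  surjective_map -> exists phi, is_lift alpha phi psi.
Proof.
  intro Hsurj. destruct (section_of_surjective Hsurj) as [sec Hsec].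
  exists (fun s => sec (psi (alpha_omega alpha s))).
  intro s; symmetry; apply Hsec.
Qed.

End Lifts.

Theorem lemma5p3 (tau A B : Type)
  (opA : tau -> (nat -> A) -> A) (opB : tau -> (nat -> B) -> B)
  (alpha : A -> B)
  (Hhom : is_hom opA opB alpha)
  (Hsurj : forall b : B, exists a : A, alpha a = b) :
  (forall (phi : (nat -> A) -> A) (psi1 psi2 : (nat -> B) -> B),
      is_lift alpha phi psi1 -> is_lift alpha phi psi2 -> psi1 = psi2) /\
  (forall phi : (nat -> A) -> A,
      liftable alpha phi -> is_lift alpha phi (alpha_star alpha phi)) /\
  ((forall i : nat, liftable alpha (clone_e i)) /\
   (forall f : tau, liftable alpha (opA f)) /\
   (forall g : nat -> ((nat -> A) -> A),
       (forall j, liftable alpha (g j)) -> liftable alpha (clone_q g))) /\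
  ((forall i : nat, alpha_star alpha (clone_e i) = clone_e i) /\
   (forall f : tau, alpha_star alpha (opA f) = opB f) /\
   (forall g : nat -> ((nat -> A) -> A),
       (forall j, liftable alpha (g j)) ->
       alpha_star alpha (clone_q g) = clone_q (fun j => alpha_star alpha (g j))) /\
   (forall psi : (nat -> B) -> B,
       exists phi, liftable alpha phi /\ alpha_star alpha phi = psi)).
Proof.
  assert (Hq : forall g : nat -> (nat -> A) -> A, (forall j, liftable alpha (g j)) ->
      is_lift alpha (clone_q g) (clone_q (fun j => alpha_star alpha (g j)))).
  { intros g Hg. apply is_lift_clone_q; intro j. now apply alpha_star_is_lift. }
  repeat split.
  - intros phi psi1 psi2. now apply is_lift_unique.
  - apply alpha_star_is_lift.
  - intro i. exists (clone_e i). apply is_lift_clone_e.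
  - intro f. exists (opB f). now apply is_lift_op.
  - intros g Hg. eexists. now apply Hq.
  - intro i. apply alpha_star_eq; [exact Hsurj | apply is_lift_clone_e].
  - intro f. apply alpha_star_eq; [exact Hsurj | now apply is_lift_op].
  - intros g Hg. apply alpha_star_eq; [exact Hsurj | now apply Hq].
  - intro psi. destruct (is_lift_through_section alpha psi Hsurj) as [phi Hphi].
    exists phi. split; [now exists psi | now apply alpha_star_eq].
Qed.
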